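(* Consider the nonlinear program and the objects $\mathcal{G}_\alpha$, $K_\alpha(x)$, $\Lambda_\alpha(x)$ described in the context, with $\alpha>0$ and $x\in\mathbb{R}^n$. If $\Lambda_\alpha(x)\ne\emptyset$, then: (i) every $(u,v)\in\Lambda_\alpha(x)$ is a minimizer of $\left\|\frac{\partial g}{\partial x}(x)^\top u+\frac{\partial h}{\partial x}(x)^\top v\right\|^2$ over $(u,v)\in K_\alpha(x)$; (ii) for every minimizer $(u,v)$ of that problem, $\mathcal{G}_\alpha(x)=-\nabla f(x)-\frac{\partial g}{\partial x}(x)^\top u-\frac{\partial h}{\partial x}(x)^\top v$, i.e. $\mathcal{G}_\alpha$ is the closed-loop vector field obtained by applying this feedback to the control system $\dot x=-\nabla f(x)-\frac{\partial g}{\partial x}(x)^\top u-\frac{\partial h}{\partial x}(x)^\top v$.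
   Context: Let $f:\mathbb{R}^n\to\mathbb{R}$, $g:\mathbb{R}^n\to\mathbb{R}^m$, $h:\mathbb{R}^n\to\mathbb{R}^k$ be continuously differentiable (program: minimize $f$ subject to $g\le0$, $h=0$). Abbreviate $G=\frac{\partial g}{\partial x}(x)$, $H=\frac{\partial h}{\partial x}(x)$. For $\alpha>0$, $\mathcal{G}_\alpha(x)$ is the unique minimizer over $\xi\in\mathbb{R}^n$ of $\frac12\|\xi+\nabla f(x)\|^2$ subject to $G\xi\le-\alpha g(x)$, $H\xi=-\alpha h(x)$. $\Lambda_\alpha(x)$ is the set of $(u,v)\in\mathbb{R}^m_{\ge0}\times\mathbb{R}^k$ for which there exists $\xi\in\mathbb{R}^n$ with $\xi+\nabla f(x)+G^\top u+H^\top v=0$, $G\xi+\alpha g(x)\le0$, $H\xi+\alpha h(x)=0$, $u\ge0$, $u^\top(G\xi+\alpha g(x))=0$. The admissible control set is $K_\alpha(x)=\{(u,v)\in\mathbb{R}^m_{\ge0}\times\mathbb{R}^k: -GG^\top u-GH^\top v\le G\nabla f(x)-\alpha g(x),\ -HG^\top u-HH^\top v=H\nabla f(x)-\alpha h(x)\}$. *)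

From HB Require Import structures.
From mathcomp Require Import all_boot all_order all_algebra.
From mathcomp Require Import all_classical all_reals all_analysis.
Set Implicit Arguments. Unset Strict Implicit. Unset Printing Implicit Defensive.
Import Order.TTheory GRing.Theory Num.Theory.
Import numFieldNormedType.Exports.
Local Open Scope ring_scope.

Section Defs.
Variable R : realType.

Definition evec (n : nat) (i : 'I_n) : 'cV[R]_n := delta_mx i 0.

(* continuously differentiable (C^1): differentiable everywhere, with
   continuous partial derivatives (equivalent to C^1 in finite dimension) *)
Definition C1 (n p : nat) (F : 'cV[R]_n -> 'cV[R]_p) : Prop :=
  (forall y, differentiable F y) /\
  (forall i : 'I_n, continuous (fun y => 'D_(evec i) F y)).

Definition C1s (n : nat) (F : 'cV[R]_n -> R) : Prop :=
  (forall y, differentiable F y) /\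
  (forall i : 'I_n, continuous (fun y => 'D_(evec i) F y)).

Definition grad (n : nat) (f : 'cV[R]_n -> R) (x : 'cV[R]_n) : 'cV[R]_n :=
  \col_i ('D_(evec i) f x).

Definition jac (n p : nat) (F : 'cV[R]_n -> 'cV[R]_p) (x : 'cV[R]_n) : 'M[R]_(p, n) :=
  \matrix_(j, i) (('D_(evec i) F x) j 0).

Definition sqnorm (p : nat) (v : 'cV[R]_p) : R := \sum_i (v i 0) ^+ 2.

Definition cle (p : nat) (a b : 'cV[R]_p) : Prop := forall j, a j 0 <= b j 0.

Variables (n m k : nat) (f : 'cV[R]_n -> R) (g : 'cV[R]_n -> 'cV[R]_m)
  (h : 'cV[R]_n -> 'cV[R]_k).

Definition QPfeas (alpha : R) (x xi : 'cV[R]_n) : Prop :=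
  cle (jac g x *m xi) (- (alpha *: g x)) /\ jac h x *m xi = - (alpha *: h x).

Definition QPmin (alpha : R) (x xi : 'cV[R]_n) : Prop :=
  QPfeas alpha x xi /\
  forall zeta, QPfeas alpha x zeta ->
    (1/2) * sqnorm (xi + grad f x) <= (1/2) * sqnorm (zeta + grad f x).

Definition Galpha (alpha : R) (x : 'cV[R]_n) : 'cV[R]_n :=
  xget 0 [set xi | QPmin alpha x xi].

Definition Lambda (alpha : R) (x : 'cV[R]_n) : set ('cV[R]_m * 'cV[R]_k) :=
  [set uv | let u := uv.1 in let v := uv.2 in
    cle 0 u /\
    exists xi : 'cV[R]_n,
      xi + grad f x + (jac g x)^T *m u + (jac h x)^T *m v = 0 /\
      cle (jac g x *m xi + alpha *: g x) 0 /\
      jac h x *m xi + alpha *: h x = 0 /\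
      cle 0 u /\
      (u^T *m (jac g x *m xi + alpha *: g x)) 0 0 = 0].

Definition Kadm (alpha : R) (x : 'cV[R]_n) : set ('cV[R]_m * 'cV[R]_k) :=
  [set uv | let u := uv.1 in let v := uv.2 in
    cle 0 u /\
    cle (- (jac g x *m (jac g x)^T *m u) - jac g x *m (jac h x)^T *m v)
        (jac g x *m grad f x - alpha *: g x) /\
    - (jac h x *m (jac g x)^T *m u) - jac h x *m (jac h x)^T *m v
      = jac h x *m grad f x - alpha *: h x].

Definition Kmin (alpha : R) (x : 'cV[R]_n) (uv : 'cV[R]_m * 'cV[R]_k) : Prop :=
  Kadm alpha x uv /\
  forall uv', Kadm alpha x uv' ->
    sqnorm ((jac g x)^T *m uv.1 + (jac h x)^T *m uv.2)
      <= sqnorm ((jac g x)^T *m uv'.1 + (jac h x)^T *m uv'.2).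

End Defs.

From HB Require Import structures.
From mathcomp Require Import all_boot all_order all_algebra.
From mathcomp Require Import all_classical all_reals all_analysis.
From mathcomp Require Import ring lra.
Import Order.TTheory GRing.Theory Num.Theory.
Import numFieldNormedType.Exports.
Local Open Scope ring_scope.
Set Implicit Arguments. Unset Strict Implicit. Unset Printing Implicit Defensive.

(* At a fixed x everything is linear algebra: write G = jac g x, H = jac h x,
   d = grad f x and xi(u, v) = - d - G^T u - H^T v, so that the objective of
   K_alpha(x) is |xi(u, v) + d|^2 and (u, v) is admissible iff u >= 0 and
   xi(u, v) is feasible for the QP defining G_alpha(x).  If (u, v) lies in
   Lambda_alpha(x) then xi(u, v) satisfies the KKT conditions of that QP, and
   the KKT conditions give the Pythagorean inequality
     |xi + d|^2 + |z - xi|^2 <= |z + d|^2   for every feasible z.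
   Hence xi(u, v) is the unique QP solution, every admissible (u', v') has a
   larger objective, and any minimizer of the objective has the same xi. *)

Section Euclidean.
Variable R : realType.
Implicit Types p q : nat.

Definition dotc p (a b : 'cV[R]_p) : R := (a^T *m b) 0 0.

Lemma dotcE p (a b : 'cV[R]_p) : dotc a b = \sum_i a i 0 * b i 0.
Proof. by rewrite /dotc mxE; apply: eq_bigr => i _; rewrite mxE. Qed.

Lemma dotcC p (a b : 'cV[R]_p) : dotc a b = dotc b a.
Proof. by rewrite !dotcE; apply: eq_bigr => i _; rewrite mulrC. Qed.

Lemma dotcDr p (a b c : 'cV[R]_p) : dotc a (b + c) = dotc a b + dotc a c.
Proof. by rewrite /dotc mulmxDr mxE. Qed.

Lemma dotcNr p (a b : 'cV[R]_p) : dotc a (- b) = - dotc a b.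
Proof. by rewrite /dotc mulmxN mxE. Qed.

Lemma dotc0r p (a : 'cV[R]_p) : dotc a 0 = 0.
Proof. by rewrite /dotc mulmx0 mxE. Qed.

Lemma dotcDl p (a b c : 'cV[R]_p) : dotc (a + b) c = dotc a c + dotc b c.
Proof. by rewrite dotcC dotcDr !(dotcC c). Qed.

Lemma dotcNl p (a b : 'cV[R]_p) : dotc (- a) b = - dotc a b.
Proof. by rewrite dotcC dotcNr dotcC. Qed.

Lemma dotc_trmx_mul p q (A : 'M[R]_(q, p)) (u : 'cV_q) (z : 'cV_p) :
  dotc (A^T *m u) z = dotc u (A *m z).
Proof. by rewrite /dotc trmx_mul trmxK mulmxA. Qed.

Lemma dotc_ge0_le0 p (u e : 'cV[R]_p) : cle 0 u -> cle e 0 -> dotc u e <= 0.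
Proof.
move=> u_ge0 e_le0; rewrite dotcE; apply: sumr_le0 => i _.
by apply: mulr_ge0_le0; [have := u_ge0 i | have := e_le0 i]; rewrite mxE.
Qed.

Lemma sqnorm_dotc p (a : 'cV[R]_p) : sqnorm a = dotc a a.
Proof. by rewrite dotcE /sqnorm; apply: eq_bigr => i _; rewrite expr2. Qed.

Lemma sqnormD p (a b : 'cV[R]_p) :
  sqnorm (a + b) = sqnorm a + 2 * dotc a b + sqnorm b.
Proof. by rewrite !sqnorm_dotc dotcDl !dotcDr (dotcC b a); ring. Qed.

Lemma sqnormN p (a : 'cV[R]_p) : sqnorm (- a) = sqnorm a.
Proof. by rewrite !sqnorm_dotc dotcNl dotcNr opprK. Qed.

Lemma sqnorm_ge0 p (a : 'cV[R]_p) : 0 <= sqnorm a.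
Proof. by apply: sumr_ge0 => i _; apply: sqr_ge0. Qed.

Lemma sqnorm_le0 p (a : 'cV[R]_p) : sqnorm a <= 0 -> a = 0.
Proof.
move=> a_le0; have /eqP : sqnorm a = 0 by apply/le_anti; rewrite a_le0 sqnorm_ge0.
rewrite psumr_eq0 => [/allP a0|i _]; last exact: sqr_ge0.
apply/matrixP => i j; rewrite (ord1 j) mxE.
by have := a0 i (mem_index_enum i); rewrite /= sqrf_eq0 => /eqP.
Qed.

Lemma cle_subl p (a w e : 'cV[R]_p) : cle (a - w) e <-> cle a (w + e).
Proof. by split=> le_ae i; have := le_ae i; rewrite !mxE lerBlDl. Qed.

Lemma sqnormD_le_uniq p (P : set 'cV[R]_p) (d xi z : 'cV[R]_p) :
  (forall y, P y -> sqnorm (xi + d) + sqnorm (y - xi) <= sqnorm (y + d)) ->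
  P z -> sqnorm (z + d) <= sqnorm (xi + d) -> z = xi.
Proof.
move=> pyth Pz le_z; apply/eqP; rewrite -subr_eq0; apply/eqP/sqnorm_le0.
by have := pyth z Pz; lra.
Qed.

End Euclidean.

Section KKT.
Variables (R : realType) (p q r : nat).
Variables (G : 'M[R]_(q, p)) (H : 'M[R]_(r, p)).
Variables (b : 'cV[R]_q) (c : 'cV[R]_r) (d : 'cV[R]_p).

Definition feasible (z : 'cV[R]_p) : Prop := cle (G *m z) b /\ H *m z = c.

Definition feedback (u : 'cV[R]_q) (v : 'cV[R]_r) : 'cV[R]_p :=
  - d - G^T *m u - H^T *m v.

Lemma feedbackDd u v : feedback u v + d = - (G^T *m u + H^T *m v).
Proof. by rewrite /feedback addrAC (addrAC (- d)) addNr add0r opprD. Qed.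

Lemma mulmx_feedback s (K : 'M[R]_(s, p)) u v :
  K *m feedback u v = - (K *m G^T *m u) - K *m H^T *m v - K *m d.
Proof. by rewrite /feedback !mulmxBr mulmxN !mulmxA -addrA [LHS]addrC. Qed.

Lemma feedback_stationary (xi : 'cV[R]_p) u v :
  xi + d + G^T *m u + H^T *m v = 0 -> xi = feedback u v.
Proof.
by move/eqP; rewrite -!addrA addr_eq0 => /eqP->; rewrite /feedback !opprD !addrA.
Qed.

(* The cross term of |z + d|^2 = |(xi + d) + (z - xi)|^2 is
   - u^T (G z - b) >= 0, by stationarity and complementary slackness. *)
Lemma kkt_sqnormD_le u v :
  cle 0 u -> feasible (feedback u v) -> dotc u (G *m feedback u v - b) = 0 ->
  forall z, feasible z ->
  sqnorm (feedback u v + d) + sqnorm (z - feedback u v) <= sqnorm (z + d).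
Proof.
set xi := feedback u v => u_ge0 [_ H_xi] slack z [G_z H_z].
have -> : z + d = (xi + d) + (z - xi) by rewrite [RHS]addrAC [xi + _]addrC subrK.
suff cross_ge0 : 0 <= dotc (xi + d) (z - xi).
  by rewrite (sqnormD (xi + d)); lra.
have G_zxi : G *m (z - xi) = (G *m z - b) - (G *m xi - b).
  by rewrite mulmxBr opprB addrA subrK.
have H_zxi : H *m (z - xi) = 0 by rewrite mulmxBr H_z H_xi subrr.
rewrite feedbackDd dotcNl dotcDl !dotc_trmx_mul G_zxi H_zxi dotcDr dotcNr slack.
rewrite dotc0r subr0 addr0 oppr_ge0; apply: dotc_ge0_le0 => // j.
by have := G_z j; rewrite !mxE subr_le0.
Qed.

End KKT.

Section NonlinearProgram.
Variables (R : realType) (n m k : nat).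
Variables (f : 'cV[R]_n -> R) (g : 'cV[R]_n -> 'cV[R]_m) (h : 'cV[R]_n -> 'cV[R]_k).
Variables (alpha : R) (x : 'cV[R]_n).

Local Notation xi := (feedback (jac g x) (jac h x) (grad f x)).
Local Notation QPfeas := (QPfeas g h alpha x).

Lemma Kobjective_feedback u v :
  sqnorm ((jac g x)^T *m u + (jac h x)^T *m v) = sqnorm (xi u v + grad f x).
Proof. by rewrite feedbackDd sqnormN. Qed.

Lemma Kadm_feedback u v :
  Kadm f g h alpha x (u, v) <-> cle 0 u /\ QPfeas (xi u v).
Proof.
rewrite /Kadm /QPfeas /= !mulmx_feedback -cle_subl; split=> -[u_ge0 [G_le H_eq]].
  by split=> //; split=> //; rewrite H_eq [LHS]addrC addKr.
by split=> //; split=> //; rewrite -H_eq [RHS]addrC subrK.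
Qed.

Lemma Lambda_kkt uv : Lambda f g h alpha x uv ->
  [/\ cle 0 uv.1, QPfeas (xi uv.1 uv.2) &
      forall z, QPfeas z ->
      sqnorm (xi uv.1 uv.2 + grad f x) + sqnorm (z - xi uv.1 uv.2)
        <= sqnorm (z + grad f x)].
Proof.
case: uv => u v [/= u_ge0 [y [/feedback_stationary-> [G_le [H_eq [_ slack]]]]]].
have feas : QPfeas (xi u v).
  split; last by apply/eqP; rewrite -addr_eq0 H_eq.
  by move=> j; have := G_le j; rewrite !mxE -lerBrDr sub0r.
by split=> //; apply: kkt_sqnormD_le => //; rewrite /dotc opprK.
Qed.

Lemma Galpha_Lambda uv : Lambda f g h alpha x uv ->
  Galpha f g h alpha x = xi uv.1 uv.2.
Proof.
move=> /Lambda_kkt[_ feas pyth]; apply: xget_unique.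
  split=> // z /pyth; have := sqnorm_ge0 (z - xi uv.1 uv.2); lra.
by move=> z [feas_z /(_ _ feas) min_z]; apply: sqnormD_le_uniq pyth feas_z _; lra.
Qed.

Lemma Lambda_Kmin uv : Lambda f g h alpha x uv -> Kmin f g h alpha x uv.
Proof.
case: uv => u v /Lambda_kkt[/= u_ge0 feas pyth].
split; first exact/Kadm_feedback.
move=> [u' v'] /Kadm_feedback[_ feas']; rewrite /= !Kobjective_feedback.
by have := pyth _ feas'; have := sqnorm_ge0 (xi u' v' - xi u v); lra.
Qed.

End NonlinearProgram.

Theorem mainTheorem6 (R : realType) (n m k : nat)
  (f : 'cV[R]_n -> R) (g : 'cV[R]_n -> 'cV[R]_m) (h : 'cV[R]_n -> 'cV[R]_k)
  (hf : C1s f) (hg : C1 g) (hh : C1 h)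
  (alpha : R) (x : 'cV[R]_n) :
  0 < alpha ->
  (exists uv, Lambda f g h alpha x uv) ->
  (forall uv, Lambda f g h alpha x uv -> Kmin f g h alpha x uv) /\
  (forall uv, Kmin f g h alpha x uv ->
     Galpha f g h alpha x
       = - grad f x - (jac g x)^T *m uv.1 - (jac h x)^T *m uv.2).
Proof.
move=> _ [uv0 Luv0]; split=> [|[u v] [/Kadm_feedback[_ feas] minK]].
  exact: Lambda_Kmin.
have [_ _ pyth0] := Lambda_kkt Luv0.
have := minK uv0 (Lambda_Kmin Luv0).1.
rewrite /= (Kobjective_feedback f g h x u v) (Kobjective_feedback f g h x uv0.1).
move=> le_obj.
rewrite (Galpha_Lambda Luv0); symmetry.
exact: sqnormD_le_uniq pyth0 feas le_obj.
Qed.
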